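(* Assume each $L_r:Lip_d(I)\to Lip_d(I)$ ($r\in\mathbb{N}$) is linear and that there is a linear operator $L$ on $Lip_d(I)$ with $\|Lf\|_\infty=\sup_{r\in\mathbb{N}}\|L_rf\|_\infty$ for all $f\in Lip_d(I)$. Then the non-stationary fractal operator $\mathfrak{F}^\alpha_b:Lip_d(I)\to C(I)$, $\mathfrak{F}^\alpha_b(f)=f^\alpha_b$, is relatively Lipschitz with respect to $L$: for all $f,g\in Lip_d(I)$, $$\|\mathfrak{F}^\alpha_b(f)-\mathfrak{F}^\alpha_b(g)\|_\infty\le\frac{1}{1-\|\alpha\|_\infty}\|f-g\|_\infty+\frac{\|\alpha\|_\infty}{1-\|\alpha\|_\infty}\|Lf-Lg\|_\infty,$$ so the $L$-Lipschitz constant of $\mathfrak{F}^\alpha_b$ does not exceed $\frac{\|\alpha\|_\infty}{1-\|\alpha\|_\infty}$.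
   Context: Setting: $I=[x_0,x_N]$ with partition $\Delta: x_0<x_1<\dots<x_N$, $I_i=[x_{i-1},x_i]$, $l_i:I\to I_i$ the increasing affine bijection $l_i(x)=\frac{x_i-x_{i-1}}{x_N-x_0}x+\frac{x_Nx_{i-1}-x_0x_i}{x_N-x_0}$, and $Q_i=l_i^{-1}$. Scaling functions $\alpha_{i,r}:I\to\mathbb{R}$ ($i=1,\dots,N$, $r\in\mathbb{N}$) are continuous with $\|\alpha\|_\infty:=\sup_{r}\max_i\|\alpha_{i,r}\|_\infty<1$. $Lip_d(I)$ ($0<d\le1$) is the space of real functions $g$ on $I$ with $\sup_{x\ne y}|g(x)-g(y)|/|x-y|^d<\infty$, regarded as a subset of $C(I)$ with the supremum norm. $L_r$ satisfy $(L_rg)(x_0)=g(x_0)$, $(L_rg)(x_N)=g(x_N)$ and $\sup_r\|L_r\|_\infty<\infty$ (operator norms w.r.t. the sup norm). An operator $\mathcal{T}_1$ is relatively Lipschitz w.r.t. $\mathcal{T}_2$ if $\|\mathcal{T}_1u-\mathcal{T}_1v\|\le M_1\|u-v\|+M_2\|\mathcal{T}_2u-\mathcal{T}_2v\|$ for some $M_1,M_2\ge0$ and all $u,v$; the infimum of such $M_2$ is the $\mathcal{T}_2$-Lipschitz constant. Non-stationary $\alpha$-fractal function: for $f\in C(I)$ and base functions $b_r\in C(I)$ with $b_r(x_0)=f(x_0)$, $b_r(x_N)=f(x_N)$, $\sup_r\|b_r\|_\infty<\infty$, let $C_f(I)=\{g\in C(I):g(x_0)=f(x_0),g(x_N)=f(x_N)\}$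 and $T^{\alpha_r}:C_f(I)\to C_f(I)$, $(T^{\alpha_r}g)(x)=f(x)+\alpha_{i,r}(Q_i(x))(g-b_r)(Q_i(x))$ for $x\in I_i$. For every $g\in C_f(I)$, $T^{\alpha_1}\circ\cdots\circ T^{\alpha_r}g$ converges uniformly to a function independent of $g$; this is the non-stationary $\alpha$-fractal function. $f^\alpha_b$ denotes it for $f\in Lip_d(I)$ with $b_r=L_rf$. *)

From Stdlib Require Import Reals List.
From Coquelicot Require Import Coquelicot.
Open Scope R_scope.

Definition inI (a b x : R) : Prop := a <= x <= b.

Definition cont_on (a b : R) (h : R -> R) : Prop :=
  forall x, inI a b x -> forall eps, 0 < eps ->
    exists delta, 0 < delta /\
      forall y, inI a b y -> Rabs (y - x) < delta -> Rabs (h y - h x) < eps.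

(* Supremum norm on I: sup_{x in I} |h x| (as a real; finite for h in C(I)). *)
Definition supn (a b : R) (h : R -> R) : R :=
  real (Lub_Rbar (fun y => exists x, inI a b x /\ y = Rabs (h x))).

Definition Lip (d a b : R) (g : R -> R) : Prop :=
  exists K, forall x y, inI a b x -> inI a b y -> x <> y ->
    Rabs (g x - g y) <= K * Rpower (Rabs (x - y)) d.

Definition is_partition (xs : nat -> R) (N : nat) : Prop :=
  (1 <= N)%nat /\ forall i, (i < N)%nat -> xs i < xs (S i).

(* Q_i = l_i^{-1} : I_i -> I, the inverse of the increasing affine map
   l_i(x) = (x_i - x_{i-1})/(x_N - x_0) x + (x_N x_{i-1} - x_0 x_i)/(x_N - x_0). *)
Definition Qmap (xs : nat -> R) (N i : nat) (x : R) : R :=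
  (xs N - xs 0%nat) / (xs i - xs (pred i)) * (x - xs (pred i)) + xs 0%nat.

(* Index i in {1..N} of a subinterval I_i = [x_{i-1}, x_i] containing x:
   the least i in {1..N-1} with x <= x_i, and N otherwise. *)
Fixpoint first_le (xs : nat -> R) (x : R) (i fuel : nat) : nat :=
  match fuel with
  | O => i
  | S f => if Rle_dec x (xs i) then i else first_le xs x (S i) f
  end.
Definition seg (xs : nat -> R) (N : nat) (x : R) : nat :=
  first_le xs x 1%nat (pred N).

(* The map T^{alpha_r}:
   (T g)(x) = f(x) + alpha_{i,r}(Q_i x) * (g - b_r)(Q_i x)  for x in I_i.
   alpha : nat (i) -> nat (r) -> R -> R. *)
Definition Tmap (xs : nat -> R) (N : nat) (alpha : nat -> nat -> R -> R)
  (f : R -> R) (b : nat -> R -> R) (r : nat) (g : R -> R) : R -> R :=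
  fun x => let i := seg xs N x in
    f x + alpha i r (Qmap xs N i x) * (g (Qmap xs N i x) - b r (Qmap xs N i x)).

(* Iterated composition T^{alpha_{r_0}} o ... o T^{alpha_{r_0+n-1}} applied to g,
   the maps being indexed by nat: the paper's r = 1, 2, ... is our index
   0, 1, ... (index n stands for the paper's r = n+1). *)
Fixpoint Tcomp (xs : nat -> R) (N : nat) (alpha : nat -> nat -> R -> R)
  (f : R -> R) (b : nat -> R -> R) (n : nat) (g : R -> R) : R -> R :=
  match n with
  | O => g
  | S m => Tcomp xs N alpha f b m (Tmap xs N alpha f b m g)
  end.

Definition Cf (a b : R) (f g : R -> R) : Prop :=
  cont_on a b g /\ g a = f a /\ g b = f b.

Definition is_ns_fractal (xs : nat -> R) (N : nat) (alpha : nat -> nat -> R -> R)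
  (f : R -> R) (b : nat -> R -> R) (phi : R -> R) : Prop :=
  forall g, Cf (xs 0%nat) (xs N) f g ->
    forall eps, 0 < eps -> exists M : nat, forall n, (M <= n)%nat ->
      forall x, inI (xs 0%nat) (xs N) x ->
        Rabs (Tcomp xs N alpha f b n g x - phi x) < eps.

(* max_{i=1..N} F i  (all values are >= 0 here, so 0 is a neutral seed). *)
Definition maxi (N : nat) (F : nat -> R) : R :=
  fold_right Rmax 0 (map F (seq 1 N)).

(* The set {max_i ||alpha_{i,r}||_oo : r}, whose supremum is ||alpha||_oo. *)
Definition alpha_norm_bar (xs : nat -> R) (N : nat) (alpha : nat -> nat -> R -> R) : Rbar :=
  Lub_Rbar (fun y => exists r : nat,
    y = maxi N (fun i => supn (xs 0%nat) (xs N) (alpha i r))).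
Definition alpha_norm (xs : nat -> R) (N : nat) (alpha : nat -> nat -> R -> R) : R :=
  real (alpha_norm_bar xs N alpha).

(* With D = ||f - g||, E = ||L f - L g|| and a = ||alpha||, linearity of L_r and
   ||L h|| = sup_r ||L_r h|| give ||L_r f - L_r g|| <= E for every r.  Hence the pair
   of maps (T^{alpha_r} for f, T^{alpha_r} for g) sends functions at distance <= C to
   functions at distance <= D + a (C + E), which equals C for C = (D + a E)/(1 - a).
   Starting both iterations from the chords of f and g, which are at distance <= D <= C,
   all iterates stay at distance <= C, and so do their limits f^alpha_b and g^alpha_b. *)
From Stdlib Require Import Reals List Lra Psatz Lia.
From Coquelicot Require Import Coquelicot.
Open Scope R_scope.

Definition bounded_on (a b : R) (h : R -> R) : Prop :=
  exists M, forall x, inI a b x -> Rabs (h x) <= M.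

Lemma supn_ub a b h x : bounded_on a b h -> inI a b x -> Rabs (h x) <= supn a b h.
Proof.
  intros [M HM] Hx. unfold supn.
  destruct (Lub_Rbar_correct (fun y => exists x, inI a b x /\ y = Rabs (h x))) as [Hub Hlub].
  assert (Hle := Hub (Rabs (h x)) (ex_intro _ x (conj Hx eq_refl))).
  assert (Hge : Rbar_le (Lub_Rbar (fun y => exists x, inI a b x /\ y = Rabs (h x))) M).
  { apply Hlub. intros y [z [Hz ->]]. apply HM; auto. }
  destruct (Lub_Rbar _); simpl in *; tauto.
Qed.

Lemma supn_le a b h C :
  0 <= C -> (forall x, inI a b x -> Rabs (h x) <= C) -> supn a b h <= C.
Proof.
  intros HC HM. unfold supn.
  destruct (Lub_Rbar_correct (fun y => exists x, inI a b x /\ y = Rabs (h x))) as [_ Hlub].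
  assert (Hge : Rbar_le (Lub_Rbar (fun y => exists x, inI a b x /\ y = Rabs (h x))) C).
  { apply Hlub. intros y [z [Hz ->]]. apply HM; auto. }
  destruct (Lub_Rbar _); simpl in *; try tauto; lra.
Qed.

Lemma supn_ge0 a b h : a <= b -> 0 <= supn a b h.
Proof.
  intros Hab. unfold supn.
  destruct (Lub_Rbar_correct (fun y => exists x, inI a b x /\ y = Rabs (h x))) as [Hub _].
  assert (Ha : inI a b a) by (unfold inI; lra).
  assert (Hle := Hub (Rabs (h a)) (ex_intro _ a (conj Ha eq_refl))).
  pose proof (Rabs_pos (h a)).
  destruct (Lub_Rbar _); simpl in *; lra.
Qed.

Lemma supn_ext a b h1 h2 :
  (forall x, inI a b x -> h1 x = h2 x) -> supn a b h1 = supn a b h2.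
Proof.
  intros Heq. unfold supn. f_equal. apply Lub_Rbar_eqset.
  intros y. split; intros [x [Hx ->]]; exists x; rewrite (Heq x Hx); auto.
Qed.

Lemma Lip_bounded_on d a b h : 0 < d -> a <= b -> Lip d a b h -> bounded_on a b h.
Proof.
  intros Hd Hab [K HK]. exists (Rabs (h a) + Rabs K * Rpower (b - a) d).
  intros x Hx. unfold inI in Hx.
  assert (Hpow_ge0 : 0 <= Rabs K * Rpower (b - a) d).
  { apply Rmult_le_pos; [apply Rabs_pos | left; apply exp_pos]. }
  destruct (Req_dec x a) as [->|Hxa]; [lra|].
  assert (Hinc := HK x a ltac:(unfold inI; lra) ltac:(unfold inI; lra) Hxa).
  assert (Hpow : Rpower (Rabs (x - a)) d <= Rpower (b - a) d).
  { apply Rle_Rpower_l; [lra|]. split; [apply Rabs_pos_lt; lra | rewrite Rabs_right; lra]. }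
  assert (Hpow_pos : 0 < Rpower (Rabs (x - a)) d) by apply exp_pos.
  assert (K * Rpower (Rabs (x - a)) d <= Rabs K * Rpower (b - a) d).
  { apply Rle_trans with (Rabs K * Rpower (Rabs (x - a)) d).
    - apply Rmult_le_compat_r; [lra | apply Rle_abs].
    - apply Rmult_le_compat_l; [apply Rabs_pos | lra]. }
  replace (h x) with (h a + (h x - h a)) by ring.
  eapply Rle_trans; [apply Rabs_triang | lra].
Qed.

Lemma cont_on_bounded_on a b h : a <= b -> cont_on a b h -> bounded_on a b h.
Proof.
  intros Hab Hc.
  (* extend h by constants outside [a, b] to use Stdlib's extreme value theorem *)
  set (clamp := fun x => Rmax a (Rmin b x)).
  assert (Hclamp_id : forall x, inI a b x -> clamp x = x).
  { intros x [H1 H2]. unfold clamp, Rmax, Rmin.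
    destruct (Rle_dec b x); destruct (Rle_dec a _); lra. }
  assert (Hclamp_in : forall x, inI a b (clamp x)).
  { intros x. unfold clamp, inI, Rmax, Rmin.
    destruct (Rle_dec b x); destruct (Rle_dec a _); lra. }
  assert (Hclamp_dist : forall x c, inI a b c -> Rabs (clamp x - c) <= Rabs (x - c)).
  { intros x c [H1 H2]. unfold clamp, Rmax, Rmin.
    destruct (Rle_dec b x); destruct (Rle_dec a _); unfold Rabs;
      repeat destruct Rcase_abs; lra. }
  destruct (continuity_ab_maj (fun x => Rabs (h (clamp x))) a b Hab) as [xmax [Hmax _]].
  { intros c Hcin eps Heps.
    destruct (Hc c Hcin eps Heps) as [delta [Hdelta Hd]].
    exists delta. split; [auto|]. intros x [_ Hx]. simpl in *. unfold R_dist in *.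
    rewrite (Hclamp_id c Hcin).
    eapply Rle_lt_trans; [apply Rabs_triang_inv2|].
    apply Hd; [apply Hclamp_in|].
    eapply Rle_lt_trans; [apply Hclamp_dist|]; auto. }
  exists (Rabs (h (clamp xmax))). intros x Hx.
  rewrite <- (Hclamp_id x Hx) at 1. apply Hmax. auto.
Qed.

Lemma bounded_on_sub a b f g :
  bounded_on a b f -> bounded_on a b g -> bounded_on a b (fun x => f x - g x).
Proof.
  intros [M1 H1] [M2 H2]. exists (M1 + M2). intros x Hx.
  eapply Rle_trans; [apply Rabs_triang|]. rewrite Rabs_Ropp.
  specialize (H1 x Hx); specialize (H2 x Hx); lra.
Qed.

(* The difference f - g, in the shape [c * g + f] of the linearity hypotheses. *)
Lemma Lip_sub d a b f g : Lip d a b f -> Lip d a b g -> Lip d a b (fun y => -1 * g y + f y).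
Proof.
  intros [K1 H1] [K2 H2]. exists (K1 + K2). intros x y Hx Hy Hxy.
  specialize (H1 x y Hx Hy Hxy). specialize (H2 x y Hx Hy Hxy).
  replace (-1 * g x + f x - (-1 * g y + f y)) with ((f x - f y) + - (g x - g y)) by ring.
  eapply Rle_trans; [apply Rabs_triang|]. rewrite Rabs_Ropp. lra.
Qed.

Lemma maxi_ub N F i : (1 <= i <= N)%nat -> F i <= maxi N F.
Proof.
  intros Hi. unfold maxi.
  assert (Hin : In i (seq 1 N)) by (apply in_seq; lia).
  induction (seq 1 N) as [|j l IH]; simpl in *; [tauto|].
  destruct Hin as [->|Hin]; [apply Rmax_l | eapply Rle_trans; [apply IH; auto | apply Rmax_r]].
Qed.

Lemma first_le_spec xs x fuel : forall i, (1 <= i)%nat ->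
  xs (pred i) <= x -> x <= xs (i + fuel)%nat ->
  let j := first_le xs x i fuel in (i <= j <= i + fuel)%nat /\ xs (pred j) <= x <= xs j.
Proof.
  induction fuel as [|fuel IH]; intros i Hi Hlo Hhi; simpl.
  - rewrite Nat.add_0_r in Hhi. split; [lia | auto].
  - destruct (Rle_dec x (xs i)) as [Hle|Hgt]; [split; [lia | auto]|].
    destruct (IH (S i)) as [Hj Hx]; [lia | simpl; lra | |].
    + replace (S i + fuel)%nat with (i + S fuel)%nat by lia. auto.
    + split; [lia | auto].
Qed.

Lemma chord_bounds a b t : a < b -> inI a b t -> 0 <= (t - a) / (b - a) <= 1.
Proof.
  intros Hab [Ht1 Ht2]. split.
  - apply Rmult_le_pos; [lra | left; apply Rinv_0_lt_compat; lra].
  - apply Rmult_le_reg_r with (b - a); [lra|].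
    unfold Rdiv. rewrite Rmult_assoc, Rinv_l by lra. lra.
Qed.

Lemma limit_diff_le (p q C : R) :
  (forall eps, 0 < eps -> exists u v, Rabs (u - p) < eps /\ Rabs (v - q) < eps /\ Rabs (u - v) <= C) ->
  Rabs (p - q) <= C.
Proof.
  intros Happrox. apply Rnot_lt_le. intros Hlt.
  destruct (Happrox ((Rabs (p - q) - C) / 2) ltac:(lra)) as [u [v [Hu [Hv Huv]]]].
  assert (Htri : Rabs (p - q) <= Rabs (u - p) + Rabs (u - v) + Rabs (v - q)).
  { replace (p - q) with (- (u - p) + (u - v) + (v - q)) by ring.
    rewrite <- (Rabs_Ropp (u - p)).
    pose proof (Rabs_triang (- (u - p) + (u - v)) (v - q)).
    pose proof (Rabs_triang (- (u - p)) (u - v)). lra. }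
  lra.
Qed.

Section Partition.

Variables (xs : nat -> R) (N : nat).
Hypothesis hpart : is_partition xs N.

Local Notation I := (inI (xs 0%nat) (xs N)).

Lemma partition_lt k : (1 <= k <= N)%nat -> xs 0%nat < xs k.
Proof.
  destruct hpart as [_ Hinc]. induction k as [|k IH]; intros Hk; [lia|].
  destruct (Nat.eq_dec k 0) as [->|Hk0]; [apply Hinc; lia|].
  eapply Rlt_trans; [apply IH; lia | apply Hinc; lia].
Qed.

Lemma partition_ends_lt : xs 0%nat < xs N.
Proof. apply partition_lt. destruct hpart. lia. Qed.

Lemma seg_spec x : I x ->
  (1 <= seg xs N x <= N)%nat /\ xs (pred (seg xs N x)) <= x <= xs (seg xs N x).
Proof.
  intros Hx. destruct hpart as [HN _]. unfold seg, inI in *.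
  destruct (first_le_spec xs x (pred N) 1%nat) as [Hj Hxj];
    [lia | simpl; lra | replace (1 + pred N)%nat with N by lia; lra |].
  split; [lia | auto].
Qed.

Lemma Qmap_seg_in x : I x -> I (Qmap xs N (seg xs N x) x).
Proof.
  intros Hx. destruct (seg_spec x Hx) as [Hj Hxj].
  set (j := seg xs N x) in *.
  assert (Hwidth : xs (pred j) < xs j).
  { replace j with (S (pred j)) at 2 by lia. apply (proj2 hpart). lia. }
  pose proof partition_ends_lt.
  pose proof (chord_bounds (xs (pred j)) (xs j) x Hwidth Hxj) as Ht.
  set (t := (x - xs (pred j)) / (xs j - xs (pred j))) in *.
  unfold Qmap.
  replace ((xs N - xs 0%nat) / (xs j - xs (pred j)) * (x - xs (pred j)) + xs 0%nat)
    with ((xs N - xs 0%nat) * t + xs 0%nat) by (unfold t; field; lra).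
  unfold inI. nra.
Qed.

Lemma alpha_norm_spec alpha :
  (forall i r, (1 <= i <= N)%nat -> cont_on (xs 0%nat) (xs N) (alpha i r)) ->
  Rbar_lt (alpha_norm_bar xs N alpha) (Finite 1) ->
  0 <= alpha_norm xs N alpha < 1 /\
  forall r i y, (1 <= i <= N)%nat -> I y -> Rabs (alpha i r y) <= alpha_norm xs N alpha.
Proof.
  intros Hcont Hlt1. pose proof partition_ends_lt as Hab.
  destruct hpart as [HN _].
  unfold alpha_norm, alpha_norm_bar in *.
  set (norms := fun y => exists r : nat,
    y = maxi N (fun i => supn (xs 0%nat) (xs N) (alpha i r))) in *.
  destruct (Lub_Rbar_correct norms) as [Hub _].
  assert (Hmax : forall r i, (1 <= i <= N)%nat ->
    supn (xs 0%nat) (xs N) (alpha i r) <= maxi N (fun i => supn (xs 0%nat) (xs N) (alpha i r)))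
    by (intros r i Hi; apply (maxi_ub N (fun i => supn _ _ (alpha i r))); auto).
  assert (H0 := Hub _ (ex_intro _ 0%nat eq_refl)).
  assert (Hs0 := Hmax 0%nat 1%nat ltac:(lia)).
  assert (Hge0 := supn_ge0 (xs 0%nat) (xs N) (alpha 1%nat 0%nat) ltac:(lra)).
  destruct (Lub_Rbar norms) as [a| |]; simpl in *; try tauto.
  split; [lra|]. intros r i y Hi Hy.
  eapply Rle_trans.
  { apply supn_ub; [apply cont_on_bounded_on; [left; exact Hab | auto] | auto]. }
  eapply Rle_trans; [apply Hmax; auto | apply (Hub _ (ex_intro _ r eq_refl))].
Qed.

Definition chord (f : R -> R) : R -> R :=
  fun x => f (xs 0%nat) + (f (xs N) - f (xs 0%nat)) / (xs N - xs 0%nat) * (x - xs 0%nat).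

Lemma chord_Cf f : Cf (xs 0%nat) (xs N) f (chord f).
Proof.
  pose proof partition_ends_lt as Hab.
  unfold Cf, chord. split; [|split; [ring | field; lra]].
  intros x _ eps Heps. set (s := (f (xs N) - f (xs 0%nat)) / (xs N - xs 0%nat)).
  pose proof (Rabs_pos s).
  exists (eps / (Rabs s + 1)). split; [apply Rdiv_lt_0_compat; lra|].
  intros y _ Hy.
  replace (f (xs 0%nat) + s * (y - xs 0%nat) - (f (xs 0%nat) + s * (x - xs 0%nat)))
    with (s * (y - x)) by ring.
  rewrite Rabs_mult.
  assert (Rabs (y - x) * (Rabs s + 1) < eps).
  { apply Rmult_lt_reg_r with (/ (Rabs s + 1)); [apply Rinv_0_lt_compat; lra|].
    rewrite Rmult_assoc, Rinv_r by lra. lra. }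
  pose proof (Rabs_pos (y - x)). nra.
Qed.

Lemma chord_diff_le f g D x :
  (forall y, I y -> Rabs (f y - g y) <= D) -> I x -> Rabs (chord f x - chord g x) <= D.
Proof.
  intros HD Hx. pose proof partition_ends_lt as Hab.
  assert (H0 := HD (xs 0%nat) ltac:(unfold inI; lra)).
  assert (H1 := HD (xs N) ltac:(unfold inI; lra)).
  pose proof (chord_bounds _ _ x Hab Hx) as Ht.
  set (t := (x - xs 0%nat) / (xs N - xs 0%nat)) in *.
  unfold chord.
  replace (f (xs 0%nat) + (f (xs N) - f (xs 0%nat)) / (xs N - xs 0%nat) * (x - xs 0%nat)
           - (g (xs 0%nat) + (g (xs N) - g (xs 0%nat)) / (xs N - xs 0%nat) * (x - xs 0%nat)))
    with ((1 - t) * (f (xs 0%nat) - g (xs 0%nat)) + t * (f (xs N) - g (xs N)))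
    by (unfold t; field; lra).
  apply Rabs_le_between in H0. apply Rabs_le_between in H1. apply Rabs_le_between. nra.
Qed.

Variables (alpha : nat -> nat -> R -> R) (a : R).
Hypothesis halpha : forall r i y, (1 <= i <= N)%nat -> I y -> Rabs (alpha i r y) <= a.

Variables (f g : R -> R) (bf bg : nat -> R -> R) (D E : R).
Hypothesis hD : forall x, I x -> Rabs (f x - g x) <= D.
Hypothesis hE : forall r y, I y -> Rabs (bf r y - bg r y) <= E.

Lemma Tmap_diff_le C r h1 h2 :
  D + a * (C + E) <= C ->
  (forall y, I y -> Rabs (h1 y - h2 y) <= C) ->
  forall x, I x -> Rabs (Tmap xs N alpha f bf r h1 x - Tmap xs N alpha g bg r h2 x) <= C.
Proof.
  intros HC Hh x Hx. unfold Tmap. cbv zeta.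
  destruct (seg_spec x Hx) as [Hi _]. pose proof (Qmap_seg_in x Hx) as Hy.
  set (i := seg xs N x) in *. set (y := Qmap xs N i x) in *.
  replace (f x + alpha i r y * (h1 y - bf r y) - (g x + alpha i r y * (h2 y - bg r y)))
    with ((f x - g x) + alpha i r y * ((h1 y - h2 y) - (bf r y - bg r y))) by ring.
  eapply Rle_trans; [apply Rabs_triang|]. rewrite Rabs_mult.
  assert (Hdiff : Rabs (h1 y - h2 y - (bf r y - bg r y)) <= C + E).
  { eapply Rle_trans; [apply Rabs_triang|]. rewrite Rabs_Ropp.
    specialize (Hh y Hy). specialize (hE r y Hy). lra. }
  assert (Rabs (alpha i r y) * Rabs (h1 y - h2 y - (bf r y - bg r y)) <= a * (C + E))
    by (apply Rmult_le_compat; auto using Rabs_pos).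
  specialize (hD x Hx). lra.
Qed.

Lemma Tcomp_diff_le C n : D + a * (C + E) <= C -> forall h1 h2,
  (forall y, I y -> Rabs (h1 y - h2 y) <= C) ->
  forall x, I x -> Rabs (Tcomp xs N alpha f bf n h1 x - Tcomp xs N alpha g bg n h2 x) <= C.
Proof.
  intros HC. induction n as [|n IH]; intros h1 h2 Hh; simpl; [auto|].
  apply IH. intros y Hy. apply Tmap_diff_le; auto.
Qed.

Lemma ns_fractal_diff_le phif phig x :
  0 <= a < 1 ->
  is_ns_fractal xs N alpha f bf phif -> is_ns_fractal xs N alpha g bg phig ->
  I x -> Rabs (phif x - phig x) <= (D + a * E) / (1 - a).
Proof.
  intros Ha Hphif Hphig Hx.
  pose proof partition_ends_lt as Hab.
  assert (HI0 : I (xs 0%nat)) by (unfold inI; lra).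
  assert (HD0 : 0 <= D) by (eapply Rle_trans; [apply Rabs_pos | apply (hD _ HI0)]).
  assert (HE0 : 0 <= E) by (eapply Rle_trans; [apply Rabs_pos | apply (hE 0%nat _ HI0)]).
  set (C := (D + a * E) / (1 - a)).
  assert (Hfix : D + a * (C + E) <= C) by (right; unfold C; field; lra).
  assert (HDC : D <= C).
  { unfold C. apply Rmult_le_reg_r with (1 - a); [lra|].
    unfold Rdiv. rewrite Rmult_assoc, Rinv_l by lra. nra. }
  apply limit_diff_le. intros eps Heps.
  destruct (Hphif _ (chord_Cf f) eps Heps) as [M1 HM1].
  destruct (Hphig _ (chord_Cf g) eps Heps) as [M2 HM2].
  set (n := max M1 M2).
  exists (Tcomp xs N alpha f bf n (chord f) x), (Tcomp xs N alpha g bg n (chord g) x).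
  split; [apply HM1; [lia | auto]|]. split; [apply HM2; [lia | auto]|].
  apply Tcomp_diff_le; auto.
  intros y Hy. eapply Rle_trans; [apply chord_diff_le; auto | auto].
Qed.

End Partition.

Lemma Ls_diff_le_supn_L d a b (Ls : nat -> (R -> R) -> R -> R) (L : (R -> R) -> R -> R) :
  0 < d -> a <= b ->
  (forall r g, Lip d a b g -> Lip d a b (Ls r g)) ->
  (forall r c g h, Lip d a b g -> Lip d a b h -> forall x, inI a b x ->
     Ls r (fun y => c * g y + h y) x = c * Ls r g x + Ls r h x) ->
  (forall c g h, Lip d a b g -> Lip d a b h -> forall x, inI a b x ->
     L (fun y => c * g y + h y) x = c * L g x + L h x) ->
  (forall g, Lip d a b g ->
     Finite (supn a b (L g)) = Lub_Rbar (fun y => exists r : nat, y = supn a b (Ls r g))) ->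
  forall r f g y, Lip d a b f -> Lip d a b g -> inI a b y ->
  Rabs (Ls r f y - Ls r g y) <= supn a b (fun x => L f x - L g x).
Proof.
  intros Hd Hab HLs_lip HLs_lin HL_lin HL_sup r f g y Hf Hg Hy.
  set (h := fun y => -1 * g y + f y).
  assert (Hh : Lip d a b h) by (apply Lip_sub; auto).
  replace (Ls r f y - Ls r g y) with (Ls r h y)
    by (unfold h; rewrite (HLs_lin r (-1) g f Hg Hf y Hy); ring).
  eapply Rle_trans.
  { apply supn_ub; [exact (Lip_bounded_on d a b _ Hd Hab (HLs_lip r h Hh)) | auto]. }
  assert (HLs_le_L : supn a b (Ls r h) <= supn a b (L h)).
  { destruct (Lub_Rbar_correct (fun y => exists r : nat, y = supn a b (Ls r h))) as [Hub _].
    assert (Hle := Hub _ (ex_intro _ r eq_refl)). rewrite <- HL_sup in Hle; auto. }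
  rewrite (supn_ext a b (L h) (fun x => L f x - L g x)) in HLs_le_L; auto.
  intros x Hx. unfold h. rewrite (HL_lin (-1) g f Hg Hf x Hx). ring.
Qed.

Theorem mainTheorem6
  (d : R) (xs : nat -> R) (N : nat)
  (alpha : nat -> nat -> R -> R)
  (Ls : nat -> (R -> R) -> (R -> R))
  (L : (R -> R) -> (R -> R))
  (hd : 0 < d <= 1)
  (hpart : is_partition xs N)
  (halpha_cont : forall i r, (1 <= i <= N)%nat -> cont_on (xs 0%nat) (xs N) (alpha i r))
  (halpha_lt1 : Rbar_lt (alpha_norm_bar xs N alpha) (Finite 1))
  (* each L_r : Lip_d(I) -> Lip_d(I), linear, fixing the endpoints *)
  (hLs_lip : forall r g, Lip d (xs 0%nat) (xs N) g -> Lip d (xs 0%nat) (xs N) (Ls r g))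
  (hLs_lin : forall r c g h, Lip d (xs 0%nat) (xs N) g -> Lip d (xs 0%nat) (xs N) h ->
     forall x, inI (xs 0%nat) (xs N) x ->
       Ls r (fun y => c * g y + h y) x = c * Ls r g x + Ls r h x)
  (hLs_a : forall r g, Lip d (xs 0%nat) (xs N) g -> Ls r g (xs 0%nat) = g (xs 0%nat))
  (hLs_b : forall r g, Lip d (xs 0%nat) (xs N) g -> Ls r g (xs N) = g (xs N))
  (* sup_r ||L_r||_oo < oo *)
  (hLs_bdd : exists M, forall r g, Lip d (xs 0%nat) (xs N) g ->
     supn (xs 0%nat) (xs N) (Ls r g) <= M * supn (xs 0%nat) (xs N) g)
  (* L : Lip_d(I) -> Lip_d(I) linear with ||L f|| = sup_r ||L_r f|| *)
  (hL_lip : forall g, Lip d (xs 0%nat) (xs N) g -> Lip d (xs 0%nat) (xs N) (L g))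
  (hL_lin : forall c g h, Lip d (xs 0%nat) (xs N) g -> Lip d (xs 0%nat) (xs N) h ->
     forall x, inI (xs 0%nat) (xs N) x ->
       L (fun y => c * g y + h y) x = c * L g x + L h x)
  (hL_sup : forall g, Lip d (xs 0%nat) (xs N) g ->
     Finite (supn (xs 0%nat) (xs N) (L g)) =
     Lub_Rbar (fun y => exists r : nat, y = supn (xs 0%nat) (xs N) (Ls r g))) :
  forall (f g phif phig : R -> R),
    Lip d (xs 0%nat) (xs N) f -> Lip d (xs 0%nat) (xs N) g ->
    is_ns_fractal xs N alpha f (fun r => Ls r f) phif ->
    is_ns_fractal xs N alpha g (fun r => Ls r g) phig ->
    supn (xs 0%nat) (xs N) (fun x => phif x - phig x)
    <= 1 / (1 - alpha_norm xs N alpha) * supn (xs 0%nat) (xs N) (fun x => f x - g x)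
       + alpha_norm xs N alpha / (1 - alpha_norm xs N alpha)
         * supn (xs 0%nat) (xs N) (fun x => L f x - L g x).
Proof.
  (* hLs_a, hLs_b, hLs_bdd and hL_lip only serve the existence of f^alpha_b; the
     estimate itself does not need them. *)
  intros f g phif phig Hf Hg Hphif Hphig.
  pose proof (partition_ends_lt xs N hpart) as Hab.
  destruct (alpha_norm_spec xs N hpart alpha halpha_cont halpha_lt1) as [Ha Halpha].
  set (a := alpha_norm xs N alpha) in *.
  set (D := supn (xs 0%nat) (xs N) (fun x => f x - g x)).
  set (E := supn (xs 0%nat) (xs N) (fun x => L f x - L g x)).
  assert (HD : forall x, inI (xs 0%nat) (xs N) x -> Rabs (f x - g x) <= D).
  { intros x Hx. apply (supn_ub _ _ (fun x => f x - g x)); auto.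
    apply (bounded_on_sub _ _ f g); apply (Lip_bounded_on d); auto; lra. }
  assert (HE : forall r y, inI (xs 0%nat) (xs N) y -> Rabs (Ls r f y - Ls r g y) <= E)
    by (intros; apply (Ls_diff_le_supn_L d _ _ Ls L); auto; lra).
  replace (1 / (1 - a) * D + a / (1 - a) * E) with ((D + a * E) / (1 - a)) by (field; lra).
  apply supn_le.
  - apply Rmult_le_pos; [| left; apply Rinv_0_lt_compat; lra].
    pose proof (supn_ge0 (xs 0%nat) (xs N) (fun x => f x - g x)).
    pose proof (supn_ge0 (xs 0%nat) (xs N) (fun x => L f x - L g x)). unfold D, E. nra.
  - intros x Hx. apply (ns_fractal_diff_le xs N hpart alpha a Halpha f g
      (fun r => Ls r f) (fun r => Ls r g) D E HD HE); auto.
Qed.
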